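(* Let $J^\star$ be the optimal cost function of the belief MDP with true parameter $\bm{\theta}$, $\overline{J}^\star$ that of the belief MDP with conjectured parameter $\overline{\bm{\theta}}$, and $\tilde J(\mathbf{b})=V^\star(\Phi(\mathbf{b}))$ the quantized approximation built from the conjectured model (see context). Suppose $\alpha\in[0,2]$ satisfies $\sum_{\mathbf{b}'\in\mathcal{B}}|p_{\bm{\theta}}(\mathbf{b}'\mid\mathbf{b},a)-p_{\overline{\bm{\theta}}}(\mathbf{b}'\mid\mathbf{b},a)|\le\alpha$ for all $\mathbf{b}\in\mathcal{B},a\in\mathcal{A}$. Let $c_{\max}=\max_{\mathbf{b}\in\mathcal{B},a\in\mathcal{A}}\hat c(\mathbf{b},a)$ and $\epsilon=\max_{\tilde{\mathbf{b}}\in\tilde{\mathcal{B}}}\sup_{\mathbf{b},\mathbf{b}'\in S_{\tilde{\mathbf{b}}}}|\overline{J}^\star(\mathbf{b})-\overline{J}^\star(\mathbf{b}')|$, where $S_{\tilde{\mathbf{b}}}=\{\mathbf{b}\in\mathcal{B}:\Phi(\mathbf{b})=\tilde{\mathbf{b}}\}$. Then $$\|\tilde J-J^\star\|_\infty\le\frac{\epsilon}{1-\gamma}+\frac{\gamma\alpha c_{\max}}{(1-\gamma)^2}.$$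
   Context: A POMDP has finite state space $\mathcal{S}=\{1,\dots,n\}$, finite action and observation spaces, costs $c(s,a)$ and discount factor $\gamma\in(0,1)$. Its belief MDP has state space $\mathcal{B}$ (the probability simplex over $\mathcal{S}$), cost $\hat c(\mathbf{b},a)=\sum_s\mathbf{b}(s)c(s,a)$, and belief transition probabilities $p_{\bm{\theta}'}(\mathbf{b}'\mid\mathbf{b},a)$ depending on a parameter vector $\bm{\theta}'$ (nonzero for finitely many $\mathbf{b}'$ given $\mathbf{b},a$). For $\bm{\theta}'\in\{\bm{\theta},\overline{\bm{\theta}}\}$ the optimal discounted cost function satisfies the Bellman equation $J(\mathbf{b})=\min_a[\hat c(\mathbf{b},a)+\gamma\sum_{\mathbf{b}'}p_{\bm{\theta}'}(\mathbf{b}'\mid\mathbf{b},a)J(\mathbf{b}')]$; these are $J^\star$ (for $\bm{\theta}$) and $\overline{J}^\star$ (for $\overline{\bm{\theta}}$). For a resolution $r\in\{1,2,\dots\}$, $\tilde{\mathcal{B}}=\{\tilde{\mathbf{b}}\in\mathcal{B}:\tilde{\mathbf{b}}(s)=\beta_s/r,\ \beta_s\in\{0,\dots,r\},\ \sum_s\beta_s=r\}$ and $\Phi(\mathbf{b})=\arg\min_{\tilde{\mathbf{b}}\in\tilde{\mathcal{B}}}\|\mathbf{b}-\tilde{\mathbf{b}}\|_\infty$ (ties broken consistently). The quantized MDP has state space $\tilde{\mathcal{B}}$, cost $\hat c$, transitions $\hat p_{\overline{\bm{\theta}}}(\tilde{\mathbf{b}}'\mid\tilde{\mathbf{b}},a)=\sum_{\mathbf{b}'}p_{\overline{\bm{\theta}}}(\mathbf{b}'\mid\tilde{\mathbf{b}},a)\delta_{\tilde{\mathbf{b}}'\Phi(\mathbf{b}')}$,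 discount $\gamma$, and optimal cost function $V^\star$. *)

From mathcomp Require Import all_boot all_order all_algebra.
From mathcomp Require Import all_classical all_reals.
Set Implicit Arguments. Unset Strict Implicit. Unset Printing Implicit Defensive.
Import Order.TTheory GRing.Theory Num.Theory.
Local Open Scope classical_set_scope.
Local Open Scope ring_scope.

Section Defs.
Variables (R : realType) (n : nat) (A : finType).

Definition belief := {ffun 'I_n -> R}.

Definition simplex : set belief :=
  [set b | (forall s, 0 <= b s) /\ \sum_(s < n) b s = 1].

Definition grid (r : nat) : set belief :=
  [set bt | exists beta : 'I_n -> nat,
      (forall s, (beta s <= r)%N) /\ (\sum_(s < n) beta s)%N = r /\
      forall s, bt s = (beta s)%:R / r%:R].

Definition dist_inf (b b' : belief) : R := \big[Num.max/0]_(s < n) `|b s - b' s|.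

Definition is_quantizer (r : nat) (Phi : belief -> belief) : Prop :=
  forall b, simplex b -> grid r (Phi b) /\
    forall bt, grid r bt -> dist_inf b (Phi b) <= dist_inf b bt.

Definition chat (c : 'I_n -> A -> R) (b : belief) (a : A) : R :=
  \sum_(s < n) b s * c s a.

Definition belief_kernel (p : belief -> A -> belief -> R) : Prop :=
  forall b a, simplex b ->
    finite_set [set b' | p b a b' != 0] /\
    (forall b', p b a b' != 0 -> simplex b') /\
    (forall b', 0 <= p b a b') /\
    \sum_(b' \in [set: belief]) p b a b' = 1.

Definition is_min_over_actions (x : R) (Q : A -> R) : Prop :=
  (exists a, x = Q a) /\ (forall a, x <= Q a).

(* J is the optimal discounted cost function of the belief MDP with kernel p:
   the bounded solution on B of the Bellman equation. *)
Definition optimal_cost (c : 'I_n -> A -> R) (gamma : R)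
    (p : belief -> A -> belief -> R) (J : belief -> R) : Prop :=
  (exists M, forall b, simplex b -> `|J b| <= M) /\
  forall b, simplex b ->
    is_min_over_actions (J b)
      (fun a => chat c b a + gamma * \sum_(b' \in [set: belief]) p b a b' * J b').

Definition quantized_kernel (Phi : belief -> belief)
    (p : belief -> A -> belief -> R) (bt : belief) (a : A) (bt' : belief) : R :=
  \sum_(b' \in [set: belief]) p bt a b' * (if bt' == Phi b' then 1 else 0).

Definition optimal_cost_quantized (r : nat) (c : 'I_n -> A -> R) (gamma : R)
    (Phi : belief -> belief) (p : belief -> A -> belief -> R) (V : belief -> R)
    : Prop :=
  forall bt, grid r bt ->
    is_min_over_actions (V bt)
      (fun a => chat c bt a + gamma *
         \sum_(bt' \in grid r) quantized_kernel Phi p bt a bt' * V bt').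

Definition cmax (c : 'I_n -> A -> R) : R :=
  sup [set chat c b a | b in simplex & a in [set: A]].

Definition cell (Phi : belief -> belief) (bt : belief) : set belief :=
  [set b | simplex b /\ Phi b = bt].

Definition quant_eps (r : nat) (Phi : belief -> belief) (J : belief -> R) : R :=
  sup [set sup [set `|J b - J b'| | b in cell Phi bt & b' in cell Phi bt]
      | bt in grid r].

End Defs.

From mathcomp Require Import all_boot all_order all_algebra.
From mathcomp Require Import all_classical all_reals.
From mathcomp Require Import finmap ring lra.
Set Implicit Arguments. Unset Strict Implicit. Unset Printing Implicit Defensive.
Import Order.TTheory GRing.Theory Num.Theory.
Local Open Scope classical_set_scope.
Local Open Scope ring_scope.

(* By the triangle inequality, |V(Phi b) - J*(b)| <= |V(Phi b) - Jbar*(b)| +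
   |Jbar*(b) - J*(b)|, and each term is bounded by a contraction argument on
   the Bellman equations: the supremum K of the error satisfies
   K <= gamma K + e, hence K <= e / (1 - gamma).  For the quantization error,
   V(Phi b) and Jbar*(Phi b) solve Bellman equations with the same kernel
   (the quantized kernel pushes pbar forward along Phi), so they differ by at
   most gamma K, and Jbar* moves by at most eps inside a cell: e = eps.  For
   the model error, the two kernels differ by at most alpha in total
   variation and |J*| <= c_max / (1 - gamma): e = gamma alpha c_max / (1 - gamma). *)

Lemma contraction_le (R : realType) (T : Type) (S : set T) (f : T -> R) (g e : R) :
  0 <= g < 1 -> (exists M, forall x, S x -> f x <= M) ->
  (forall K, (forall x, S x -> f x <= K) -> forall x, S x -> f x <= g * K + e) ->
  forall x, S x -> f x <= e / (1 - g).
Proof.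
move=> /andP[g_ge0 g_lt1] [M fM] contract x Sx.
have f_ub : has_ubound (f @` S) by exists M => _ [y Sy <-]; exact: fM.
have le_sup y : S y -> f y <= sup (f @` S).
  by move=> Sy; apply: ub_le_sup => //; exists y.
have sup_le : sup (f @` S) <= g * sup (f @` S) + e.
  by apply: ge_sup; [exists (f x), x | move=> _ [y Sy <-]; exact: contract].
apply: le_trans (le_sup x Sx) _.
rewrite ler_pdivlMr ?subr_gt0 //; nra.
Qed.

Lemma is_min_over_actions_dist (R : realType) (A : finType) (x y d : R) (Q1 Q2 : A -> R) :
  is_min_over_actions x Q1 -> is_min_over_actions y Q2 ->
  (forall a, `|Q1 a - Q2 a| <= d) -> `|x - y| <= d.
Proof.
move=> [[a1 ->] min1] [[a2 ->] min2] Qd.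
have := Qd a1; have := Qd a2; rewrite !ler_norml => /andP[? ?] /andP[? ?].
have := min1 a2; have := min2 a1; lra.
Qed.

Lemma bellman_termB_le (R : realType) (c g X Y d : R) :
  0 <= g -> `|X - Y| <= d -> `|(c + g * X) - (c + g * Y)| <= g * d.
Proof.
move=> g_ge0 XYd; rewrite opprD addrACA subrr add0r -mulrBr normrM ger0_norm //.
exact: ler_wpM2l.
Qed.

Section KernelMean.
Variables (R : realType) (n : nat) (A : finType).
Local Notation belief := (belief R n).
Implicit Types (q : belief -> A -> belief -> R) (f g : belief -> R).

Definition kernel_supp q b a : {fset belief} := fset_set [set x | q b a x != 0].

Lemma kernel_sum_fset q b a f (s : {fset belief}) :
  (forall x, q b a x != 0 -> x \in s) ->
  \sum_(x \in [set: belief]) q b a x * f x = \sum_(x <- s) q b a x * f x.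
Proof.
move=> supp_s; apply: fsbigTE => x xNs.
by case: (eqVneq (q b a x) 0) => [->|/supp_s]; [rewrite mul0r | rewrite (negbTE xNs)].
Qed.

Variables (q : belief -> A -> belief -> R) (b : belief) (a : A).
Hypotheses (kq : belief_kernel q) (sb : simplex b).

Lemma mem_kernel_supp x : q b a x != 0 -> x \in kernel_supp q b a.
Proof. by have [fin _] := @kq b a sb; rewrite in_fset_set // => ?; apply: mem_set. Qed.

Lemma kernel_supp_simplex x : x \in kernel_supp q b a -> simplex x.
Proof.
have [fin [supp_simplex _]] := @kq b a sb.
by rewrite in_fset_set // => /set_mem; exact: supp_simplex.
Qed.

Lemma kernel_sum_supp f :
  \sum_(x \in [set: belief]) q b a x * f x = \sum_(x <- kernel_supp q b a) q b a x * f x.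
Proof. exact: kernel_sum_fset mem_kernel_supp. Qed.

Lemma kernel_supp_sum1 : \sum_(x <- kernel_supp q b a) q b a x = 1.
Proof.
have [_ [_ [_ <-]]] := @kq b a sb; apply/esym/fsbigTE => x.
by apply: contraNeq; exact: mem_kernel_supp.
Qed.

Lemma kernel_mean_le f K : (forall x, simplex x -> f x <= K) ->
  \sum_(x \in [set: belief]) q b a x * f x <= K.
Proof.
have [_ [_ [q_ge0 _]]] := @kq b a sb.
move=> fK; rewrite kernel_sum_supp -[leRHS]mul1r -kernel_supp_sum1 mulr_suml.
rewrite !big_seq; apply: ler_sum => x /kernel_supp_simplex sx.
exact/ler_wpM2l/fK.
Qed.

Lemma kernel_meanB f g :
  \sum_(x \in [set: belief]) q b a x * f x - \sum_(x \in [set: belief]) q b a x * g x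
  = \sum_(x \in [set: belief]) q b a x * (f x - g x).
Proof. by rewrite !kernel_sum_supp -sumrB; under eq_bigr do rewrite -mulrBr. Qed.

Lemma kernel_mean_norm_le f K : (forall x, simplex x -> `|f x| <= K) ->
  `|\sum_(x \in [set: belief]) q b a x * f x| <= K.
Proof.
have [_ [_ [q_ge0 _]]] := @kq b a sb.
move=> fK; apply: le_trans (kernel_mean_le (f := fun x => `|f x|) fK).
rewrite !kernel_sum_supp; apply: le_trans (ler_norm_sum _ _ _) _.
by apply: ler_sum => x _; rewrite normrM ger0_norm.
Qed.

End KernelMean.

Lemma kernel_mean_dist (R : realType) (n : nat) (A : finType)
    (p q : belief R n -> A -> belief R n -> R) b a (f : belief R n -> R) (K alpha : R) :
  belief_kernel p -> belief_kernel q -> simplex b -> 0 <= K ->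
  (forall x, simplex x -> `|f x| <= K) ->
  \sum_(x \in [set: belief R n]) `|p b a x - q b a x| <= alpha ->
  `|\sum_(x \in [set: belief R n]) p b a x * f x
    - \sum_(x \in [set: belief R n]) q b a x * f x| <= K * alpha.
Proof.
move=> kp kq sb K_ge0 fK.
pose s := (kernel_supp p b a `|` kernel_supp q b a)%fset.
have supp_p x : p b a x != 0 -> x \in s by move/(mem_kernel_supp kp sb); rewrite inE => ->.
have supp_q x : q b a x != 0 -> x \in s.
  by move/(mem_kernel_supp kq sb); rewrite inE => ->; rewrite orbT.
have simplex_s x : x \in s -> simplex x.
  by rewrite inE => /orP[]; [exact: kernel_supp_simplex | exact: kernel_supp_simplex].
rewrite (kernel_sum_fset _ supp_p) (kernel_sum_fset _ supp_q) (fsbigTE s); last first.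
  move=> x xNs; rewrite (eqP (contraNT (@supp_p x) xNs)) (eqP (contraNT (@supp_q x) xNs)).
  by rewrite subrr normr0.
move=> pq_alpha; rewrite -sumrB; apply: le_trans (ler_norm_sum _ _ _) _.
apply: le_trans (ler_wpM2l K_ge0 pq_alpha); rewrite mulr_sumr !big_seq.
apply: ler_sum => x /simplex_s sx; rewrite -mulrBl normrM [leRHS]mulrC.
exact/ler_wpM2l/fK.
Qed.

Section Grid.
Variables (R : realType) (n r : nat).
Local Notation belief := (belief R n).

Lemma grid_finite : finite_set (@grid R n r).
Proof.
pose of_counts (beta : {ffun 'I_n -> 'I_r.+1}) : belief :=
  [ffun s => (beta s)%:R / r%:R].
apply: (sub_finite_set (B := of_counts @` setT)); last exact: finite_image.
move=> bt [beta [beta_le [_ btE]]]; exists [ffun s => inord (beta s)] => //.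
by apply/ffunP => s; rewrite !ffunE inordK ?ltnS // btE.
Qed.

Lemma grid_bounded (V : belief -> R) : exists M, forall bt, grid r bt -> `|V bt| <= M.
Proof.
exists (\sum_(x <- fset_set (@grid R n r)) `|V x|) => bt gbt.
have bt_in : bt \in fset_set (grid r).
  by rewrite in_fset_set; [exact: mem_set | exact: grid_finite].
by rewrite (bigD1_seq bt) ?fset_uniq //= lerDl sumr_ge0.
Qed.

Hypothesis r_gt0 : (0 < r)%N.

Lemma grid_simplex (bt : belief) : grid r bt -> simplex bt.
Proof.
move=> [beta [_ [beta_sum btE]]]; split; first by move=> s; rewrite btE divr_ge0.
under eq_bigr do rewrite btE.
by rewrite -mulr_suml -natr_sum beta_sum divff // pnatr_eq0 -lt0n.
Qed.

Variable Phi : belief -> belief.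
Hypothesis quantizer_Phi : is_quantizer r Phi.

Lemma quantizer_id bt : grid r bt -> Phi bt = bt.
Proof.
move=> gbt; have [_ Phi_min] := quantizer_Phi (grid_simplex gbt).
have dist_self : dist_inf bt bt = 0.
  by rewrite /dist_inf; elim/big_rec: _ => // s d _ ->; rewrite subrr normr0 maxxx.
move: (Phi_min bt gbt); rewrite dist_self => dist0.
apply/ffunP => s; apply/eqP; rewrite eq_sym -subr_eq0 -normr_eq0 eq_le normr_ge0 andbT.
by apply: le_trans dist0; rewrite /dist_inf (bigD1 s) //= le_max lexx.
Qed.

Lemma quantized_kernel_sum (A : finType) (q : belief -> A -> belief -> R)
    (V : belief -> R) b a :
  belief_kernel q -> simplex b ->
  \sum_(bt \in grid r) quantized_kernel Phi q b a bt * V bt =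
  \sum_(x \in [set: belief]) q b a x * V (Phi x).
Proof.
move=> kq sb; have fin := @grid_finite.
rewrite (fsbig_fwiden (fset_set (grid r))) //; first last.
- by move=> x [/= + gNx]; rewrite in_fset_set // => /set_mem.
- by move=> x gx /=; rewrite in_fset_set //; exact: mem_set.
rewrite (kernel_sum_supp _ kq sb (fun x => V (Phi x))).
under eq_bigr do rewrite /quantized_kernel (kernel_sum_supp _ kq sb) mulr_suml.
rewrite exchange_big /= !big_seq; apply: eq_bigr => x /(kernel_supp_simplex kq sb) sx.
have Phix_in : Phi x \in fset_set (grid r).
  by rewrite in_fset_set //; exact/mem_set/(quantizer_Phi sx).1.
rewrite (bigD1_seq (Phi x)) ?fset_uniq //= eqxx mulr1 big1 ?addr0 // => y /negbTE ->.
by rewrite mulr0 mul0r.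
Qed.

Lemma quant_eps_ge (J : belief -> R) x :
  (exists M, forall b, simplex b -> `|J b| <= M) -> simplex x ->
  `|J (Phi x) - J x| <= quant_eps r Phi J.
Proof.
move=> [M JM] sx; have gPhix := (quantizer_Phi sx).1.
pose cell_osc bt := [set `|J b1 - J b2| | b1 in cell Phi bt & b2 in cell Phi bt].
have osc_le bt y : cell_osc bt y -> y <= M + M.
  move=> [b1 [sb1 _] [b2 [sb2 _] <-]].
  by apply: le_trans (ler_normB _ _) _; apply: lerD; exact: JM.
have sup_osc_le bt : sup (cell_osc bt) <= M + M.
  have [ne|empty] := pselect (cell_osc bt !=set0); first exact: ge_sup ne (osc_le bt).
  have M_ge0 : 0 <= M := le_trans (normr_ge0 _) (JM x sx).
  by rewrite sup_out ?addr_ge0 // => -[/empty].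
apply: (@le_trans _ _ (sup (cell_osc (Phi x)))).
  apply: ub_le_sup; first by exists (M + M); exact: osc_le.
  (* x and Phi x lie in the same cell because Phi fixes the grid. *)
  have Phix_cell : cell Phi (Phi x) (Phi x).
    by split; [exact: grid_simplex | exact: quantizer_id].
  by exists (Phi x) => //; exists x.
apply: ub_le_sup; last by exists (Phi x).
by exists (M + M) => _ [bt _ <-]; exact: sup_osc_le.
Qed.

End Grid.

Section Costs.
Variables (R : realType) (n : nat) (A : finType) (c : 'I_n -> A -> R).
Hypothesis c_ge0 : forall s a, 0 <= c s a.

Lemma chat_ge0 (b : belief R n) a : simplex b -> 0 <= chat c b a.
Proof. by move=> [b_ge0 _]; apply: sumr_ge0 => s _; rewrite mulr_ge0. Qed.

Lemma chat_le_cmax (b : belief R n) a : simplex b -> chat c b a <= cmax c.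
Proof.
move=> sb; apply: sup_upper_bound; last by exists b => //; exists a.
split; first by exists (chat c b a), b => //; exists a.
pose C := \sum_(s < n) \sum_(a' : A) c s a'.
have c_le s a' : c s a' <= C.
  apply: (@le_trans _ _ (\sum_(a'' : A) c s a'')).
    by rewrite (bigD1 a') //= lerDl sumr_ge0.
  by rewrite /C (bigD1 s) //= lerDl sumr_ge0 // => i _; rewrite sumr_ge0.
exists C => _ [x [x_ge0 x_sum] [a' _ <-]].
rewrite -[leRHS]mul1r -x_sum mulr_suml; apply: ler_sum => s _.
exact: ler_wpM2l.
Qed.

Variable gamma : R.
Hypothesis gamma01 : 0 <= gamma < 1.
Local Notation belief := (belief R n).

Lemma optimal_cost_bound (q : belief -> A -> belief -> R) (J : belief -> R) :
  belief_kernel q -> optimal_cost c gamma q J ->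
  forall b, simplex b -> `|J b| <= cmax c / (1 - gamma).
Proof.
move=> kq [J_bdd bellman]; have [g_ge0 _] := andP gamma01.
apply: (contraction_le (f := fun b => `|J b|)) gamma01 J_bdd _ => K J_le b sb.
have [[a Ja] _] := bellman b sb; rewrite Ja /= addrC.
apply: le_trans (ler_normD _ _) _; rewrite normrM ger0_norm //.
apply: lerD; first exact: ler_wpM2l (kernel_mean_norm_le a kq sb J_le).
by rewrite ger0_norm ?chat_ge0 ?chat_le_cmax.
Qed.

Lemma optimal_cost_model_error (p q : belief -> A -> belief -> R) (alpha : R)
    (Jp Jq : belief -> R) :
  belief_kernel p -> belief_kernel q ->
  (forall b a, simplex b ->
     \sum_(x \in [set: belief]) `|p b a x - q b a x| <= alpha) ->
  optimal_cost c gamma p Jp -> optimal_cost c gamma q Jq ->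
  forall b, simplex b ->
    `|Jp b - Jq b| <= gamma * (cmax c / (1 - gamma) * alpha) / (1 - gamma).
Proof.
move=> kp kq pq_alpha optp optq; have [g_ge0 _] := andP gamma01.
have Jp_le := optimal_cost_bound kp optp.
have [[Mp Jp_bdd] bellman_p] := optp; have [[Mq Jq_bdd] bellman_q] := optq.
apply: (contraction_le (f := fun b => `|Jp b - Jq b|)) gamma01 _ _.
  exists (Mp + Mq) => b sb; apply: le_trans (ler_normB _ _) _.
  exact: lerD (Jp_bdd b sb) (Jq_bdd b sb).
move=> K err_le b sb; rewrite [leRHS]addrC -mulrDr.
have C_ge0 : 0 <= cmax c / (1 - gamma) := le_trans (normr_ge0 _) (Jp_le b sb).
apply: is_min_over_actions_dist (bellman_p b sb) (bellman_q b sb) _ => a.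
apply: bellman_termB_le g_ge0 _.
apply: le_trans (ler_distD (\sum_(x \in [set: belief]) q b a x * Jp x) _ _) _.
apply: lerD; first exact: kernel_mean_dist kp kq sb C_ge0 Jp_le (pq_alpha b a sb).
by rewrite (kernel_meanB _ kq sb); exact: kernel_mean_norm_le.
Qed.

Lemma quantized_cost_error (r : nat) (Phi : belief -> belief)
    (q : belief -> A -> belief -> R) (Jq V : belief -> R) :
  (0 < r)%N -> is_quantizer r Phi -> belief_kernel q ->
  optimal_cost c gamma q Jq -> optimal_cost_quantized r c gamma Phi q V ->
  forall b, simplex b -> `|V (Phi b) - Jq b| <= quant_eps r Phi Jq / (1 - gamma).
Proof.
move=> r_gt0 quantizer_Phi kq [Jq_bdd bellman_q] bellman_V; have [g_ge0 _] := andP gamma01.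
have [M Jq_le] := Jq_bdd; have [MV V_le] := grid_bounded r V.
apply: (contraction_le (f := fun b => `|V (Phi b) - Jq b|)) gamma01 _ _.
  exists (MV + M) => b sb; apply: le_trans (ler_normB _ _) _.
  exact: lerD (V_le _ (quantizer_Phi b sb).1) (Jq_le b sb).
move=> K err_le b sb; have gPhib := (quantizer_Phi b sb).1.
have sPhib := grid_simplex r_gt0 gPhib.
apply: le_trans (ler_distD (Jq (Phi b)) _ _) _; apply: lerD; last first.
  exact: (quant_eps_ge r_gt0 quantizer_Phi Jq_bdd sb).
apply: is_min_over_actions_dist (bellman_V _ gPhib) (bellman_q _ sPhib) _ => a /=.
rewrite quantized_kernel_sum //; apply: bellman_termB_le g_ge0 _.
by rewrite (kernel_meanB _ kq sPhib); exact: kernel_mean_norm_le.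
Qed.

End Costs.

Theorem theorem4p5 (R : realType) (n : nat) (A : finType) (r : nat)
    (c : 'I_n -> A -> R) (gamma alpha : R)
    (p pbar : belief R n -> A -> belief R n -> R)
    (Phi : belief R n -> belief R n)
    (Jstar Jbarstar V : belief R n -> R) :
  (0 < n)%N -> (0 < #|A|)%N -> (0 < r)%N ->
  (forall s a, 0 <= c s a) ->
  0 < gamma < 1 ->
  belief_kernel p -> belief_kernel pbar ->
  is_quantizer r Phi ->
  optimal_cost c gamma p Jstar ->
  optimal_cost c gamma pbar Jbarstar ->
  optimal_cost_quantized r c gamma Phi pbar V ->
  0 <= alpha <= 2 ->
  (forall b a, simplex b ->
     \sum_(b' \in [set: belief R n]) `|p b a b' - pbar b a b'| <= alpha) ->
  forall b, simplex b ->
    `|V (Phi b) - Jstar b| <=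
      quant_eps r Phi Jbarstar / (1 - gamma)
      + gamma * alpha * cmax c / (1 - gamma) ^+ 2.
Proof.
move=> _ _ r_gt0 c_ge0 /andP[g_gt0 g_lt1] kp kpbar quantizer_Phi opt opt_bar opt_V _
  p_pbar b sb.
have gamma01 : 0 <= gamma < 1 by rewrite ltW.
apply: le_trans (ler_distD (Jbarstar b) _ _) _; apply: lerD.
  exact: (quantized_cost_error gamma01 r_gt0 quantizer_Phi kpbar opt_bar opt_V sb).
rewrite distrC (_ : gamma * alpha * cmax c / (1 - gamma) ^+ 2
                   = gamma * (cmax c / (1 - gamma) * alpha) / (1 - gamma)).
  exact: (optimal_cost_model_error c_ge0 gamma01 kp kpbar p_pbar opt opt_bar sb).
by field; rewrite subr_eq0 gt_eqF.
Qed.
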